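(* Let $n\ge 3$. The cycle $C_n$ is pseudo-Gorenstein$^{*}$ if and only if $n\equiv 1,2,5,10 \pmod{12}$.
   Context: For a finite simple graph $G$ on vertex set $[N]$, let $S=K[x_1,\dots,x_N]$ ($K$ a field) and $I(G)$ the edge ideal generated by $x_ix_j$, $\{i,j\}\in E(G)$. Let $\alpha(G)$ be the independence number (equal to $\dim S/I(G)$). Write the Hilbert series of $S/I(G)$ uniquely as $(h_0+\dots+h_st^s)/(1-t)^{\alpha(G)}$ with $h_s\ne 0$; the numerator is the $h$-polynomial $h_G(t)$, and $\mathfrak a(G)=s-\alpha(G)$. $G$ is pseudo-Gorenstein$^{*}$ if $h_s=1$ and $\mathfrak a(G)=0$. $C_n$ denotes the cycle on $n$ vertices. *)

From mathcomp Require Import all_boot all_order all_algebra.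
Set Implicit Arguments. Unset Strict Implicit. Unset Printing Implicit Defensive.
Import GRing.Theory Num.Theory.

(* A finite simple graph on the vertex set T is a relation e : rel T
   (used symmetric and irreflexive). *)

Definition indep (T : finType) (e : rel T) (A : {set T}) : bool :=
  [forall x in A, forall y in A, ~~ e x y].

Definition alpha (T : finType) (e : rel T) : nat :=
  \max_(A : {set T} | indep e A) #|A|.

(* Hilbert function of S/I(G) in degree d: the K-dimension of the degree-d
   component, i.e. the number of monomials x^m of degree d not lying in I(G).
   A monomial x^m (exponents m : T -> nat, each <= d when the degree is d)
   lies in I(G) iff its support contains an edge. *)
Definition hilb (T : finType) (e : rel T) (d : nat) : nat :=
  #|[set m : {ffun T -> 'I_d.+1} |
      ((\sum_(x : T) (m x : nat)) == d) && indep e [set x | 0 < (m x : nat)]]|.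

(* Coefficients of the numerator h_G(t) = (1-t)^alpha * sum_d H(d) t^d. *)
Definition hcoef (T : finType) (e : rel T) (k : nat) : int :=
  \sum_(j < (alpha e).+1 | (j <= k)%N)
     ((-1) ^+ j * ('C(alpha e, j))%:Z * (hilb e (k - j))%:Z)%R.

(* pseudo-Gorenstein^* : the top (last nonzero) coefficient h_s of the
   h-polynomial equals 1 and s = alpha(G), i.e. a(G) = 0. *)
Definition pseudo_gorenstein_star (T : finType) (e : rel T) : Prop :=
  hcoef e (alpha e) = 1%R /\ (forall k, (alpha e < k)%N -> hcoef e k = 0%R).

Definition cycle_graph (n : nat) : rel 'I_n :=
  fun i j => ((j : nat) == (i.+1 %% n)) || ((i : nat) == (j.+1 %% n)).
Arguments cycle_graph n : clear implicits.

From mathcomp Require Import all_boot all_order all_algebra.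
From mathcomp Require Import zify ring.
Set Implicit Arguments. Unset Strict Implicit. Unset Printing Implicit Defensive.
Import GRing.Theory Num.Theory.

(* The Hilbert series of [S/I(G)] is [sum_S (t/(1-t))^|S|] over the independent sets [S],
   so [h_G(t) = sum_S t^|S| (1-t)^(alpha - |S|)]. Hence [a(G) <= 0] always, and the
   coefficient of [t^alpha] is [(-1)^alpha I(G; -1)], where [I] is the independence
   polynomial. Deleting a vertex gives [I(C_n; -1) = I(P_(n-1); -1) - I(P_(n-3); -1)]
   with [I(P_k; -1)] of period 6 in [k]; together with [alpha(C_n) = floor(n/2)] the condition
   [h_alpha = 1] depends only on [n mod 12] and is checked on one period. *)

Local Open Scope ring_scope.

Lemma coef_1subX_expr (R : comNzRingType) m t :
  ((1 - 'X : {poly R}) ^+ m)`_t = (-1) ^+ t * 'C(m, t)%:R.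
Proof.
elim: m t => [|m IH] [|t]; rewrite ?expr0 ?coef1 ?mulr0 ?mulr1 //.
all: rewrite exprS mulrBl mul1r coefB coefXM /= !IH ?bin0 ?subr0 ?expr0 ?mul1r //.
by rewrite binS natrD exprS; ring.
Qed.

Lemma coef_1subX_exprM (R : comNzRingType) a k (p : {poly R}) :
  ((1 - 'X) ^+ a * p)`_k =
    \sum_(j < a.+1 | (j <= k)%N) (-1) ^+ j * 'C(a, j)%:R * p`_(k - j).
Proof.
pose G j := (-1) ^+ j * 'C(a, j)%:R * p`_(k - j).
rewrite coefM (eq_bigr (G \o val)) => [|j _]; last by rewrite coef_1subX_expr.
rewrite (big_ord_widen (a + k).+1 G) ?ltnS ?leq_addl //.
rewrite [RHS](big_ord_widen_cond (a + k).+1 (fun j => (j <= k)%N) G) ?ltnS ?leq_addr //.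
rewrite big_mkcond [RHS]big_mkcond; apply: eq_bigr => j _ /=.
rewrite ltnS; case: leqP => // le_jk; case: ltnP => // lt_aj.
by rewrite /G bin_small // mulr0 mul0r.
Qed.

Lemma coef_addXnM (R : nzRingType) (p s : {poly R}) n k :
  (k < n)%N -> (p + 'X^n * s)`_k = p`_k.
Proof. by move=> ltkn; rewrite coefD coefXnM ltkn addr0. Qed.

Lemma exprD_Xn (R : comNzRingType) (p s : {poly R}) n i :
  exists r, (p + 'X^n * s) ^+ i = p ^+ i + 'X^n * r.
Proof.
exists (s * \sum_(j < i) (p + 'X^n * s) ^+ (i.-1 - j) * p ^+ j).
rewrite mulrA; set q := p + 'X^n * s.
have -> : 'X^n * s = q - p by rewrite /q addrC addKr.
by rewrite -subrXX addrC subrK.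
Qed.

(* The truncation of [t / (1 - t)] to degrees [1 .. d]. *)
Definition pgeom {R : nzRingType} (d : nat) : {poly R} := \sum_(j < d) 'X^(j.+1).

Lemma pgeom_split (R : nzRingType) d k :
  pgeom (d + k) = pgeom d + 'X^(d.+1) * \sum_(j < k) 'X^j :> {poly R}.
Proof.
rewrite /pgeom big_split_ord mulr_sumr /=; congr (_ + _).
by apply: eq_bigr => j _; rewrite -exprD addSn.
Qed.

Lemma mul1subX_pgeom (R : comNzRingType) d :
  (1 - 'X) * pgeom d = 'X * (1 - 'X^d) :> {poly R}.
Proof.
have -> : pgeom d = 'X * \sum_(j < d) 'X^j :> {poly R}.
  by rewrite mulr_sumr; apply: eq_bigr => j _; rewrite exprS.
rewrite mulrCA; congr (_ * _).
by rewrite -opprB mulNr -subrX1 opprB.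
Qed.

(* [(1 - X) * pgeom k.+1 = X * (1 - X^k.+1)], and the factor [(1 - X^k.+1)^s] does not
   affect the coefficient of [X^k]. *)
Lemma coef_1subX_pgeom (R : comNzRingType) a s k : (s <= a)%N ->
  ((1 - 'X) ^+ a * pgeom k.+1 ^+ s : {poly R})`_k =
    if (s <= k)%N then (-1) ^+ (k - s) * 'C(a - s, k - s)%:R else 0.
Proof.
move=> le_sa.
have [r ->] : exists r, (1 - 'X) ^+ a * pgeom k.+1 ^+ s =
    (1 - 'X) ^+ (a - s) * 'X^s + 'X^(k.+1) * r :> {poly R}.
  have [r Er] := exprD_Xn (1 : {poly R}) (-1) k.+1 s.
  exists ((1 - 'X) ^+ (a - s) * 'X^s * r).
  rewrite -{1}(subnK le_sa) exprD -mulrA -exprMn mul1subX_pgeom exprMn.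
  by rewrite mulrN1 in Er; rewrite Er expr1n; ring.
by rewrite (coef_addXnM _ _ (ltnSn k)) coefMXn coef_1subX_expr ltnNge; case: leqP.
Qed.

Section IndependencePolynomial.
Variables (T : finType) (e : rel T).

Lemma indepP (A : {set T}) :
  reflect (forall x y, x \in A -> y \in A -> ~~ e x y) (indep e A).
Proof.
apply: (iffP forall_inP) => [indA x y Ax Ay | indA x Ax].
  by have /forall_inP := indA x Ax; apply.
by apply/forall_inP => y; apply: indA.
Qed.

Definition nbhd (v : T) : {set T} := [set y | e v y || e y v].

Lemma indep_setU1 v (B : {set T}) :
  indep e (v |: B) = [&& ~~ e v v, [disjoint B & nbhd v] & indep e B].
Proof.
apply/indepP/and3P => [indvB | [evv disjB indB]].
  split; first by apply: indvB; rewrite setU11.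
  - rewrite disjoints_subset; apply/subsetP => y By; rewrite !inE negb_or.
    by rewrite !indvB ?setU11 ?setU1r.
  - by apply/indepP => x y Bx By; apply: indvB; rewrite setU1r.
have notN y : y \in B -> ~~ e v y && ~~ e y v.
  by move: disjB; rewrite disjoints_subset -negb_or => /subsetP/[apply]; rewrite !inE.
move=> x y; rewrite !in_setU1 => /predU1P[-> | Bx] /predU1P[-> | By] //.
- by case/andP: (notN y By).
- by case/andP: (notN x Bx).
- exact: (indepP _ indB).
Qed.

Definition indepN1 (U : {set T}) : int :=
  \sum_(S : {set T} | (S \subset U) && indep e S) (-1) ^+ #|S|.

Lemma indepN1_set0 : indepN1 set0 = 1.
Proof.
rewrite /indepN1 (big_pred1 set0) ?cards0 // => S /=.
rewrite subset0; case: eqP => // ->.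
by apply/forall_inP => x; rewrite inE.
Qed.

Lemma indepN1_delete (U : {set T}) v : v \in U -> ~~ e v v ->
  indepN1 U = indepN1 (U :\ v) - indepN1 (U :\ v :\: nbhd v).
Proof.
move=> Uv evv; rewrite /indepN1 [LHS](bigID (fun S : {set T} => v \in S)) /= addrC.
congr (_ + _); first by apply: eq_bigl => S; rewrite subsetD1 andbAC.
rewrite (reindex_onto (fun B : {set T} => v |: B) (fun S => S :\ v)); last first.
  by move=> S /andP[_]; apply: setD1K.
rewrite -sumrN; apply: eq_big => [B | B /andP[_ /eqP <-]].
  have -> : ((v |: B) :\ v == B) = (v \notin B).
    by apply/eqP/idP => [<- | /setU1K //]; rewrite setD11.
  rewrite setU11 andbT subsetD subsetD1 indep_setU1 subUset sub1set Uv evv /=.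
  by case: (B \subset U); case: (v \in B); case: [disjoint B & _]; case: indep.
by rewrite cardsU1 setD11 exprS mulN1r.
Qed.

End IndependencePolynomial.

Section HilbertSeries.
Variables (T : finType) (e : rel T).

Definition msupp d (m : {ffun T -> 'I_d.+1}) : {set T} := [set x | (0 < m x)%N].

Lemma pgeom_ord d : pgeom d = \sum_(j : 'I_d.+1 | (0 < j)%N) 'X^j :> {poly int}.
Proof. by rewrite big_mkcond big_ord_recl /= add0r. Qed.

Lemma pgeom_expr_card d (S : {set T}) : pgeom d ^+ #|S| =
  \sum_(m : {ffun T -> 'I_d.+1} | msupp m == S) 'X^(\sum_x m x) :> {poly int}.
Proof.
rewrite -prodr_const pgeom_ord (big_distr_big ord0).
have fam_supp (m : {ffun T -> 'I_d.+1}) :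
    (m \in pffun_on ord0 S (fun j : 'I_d.+1 => (0 < j)%N)) = (msupp m == S).
  apply/familyP/eqP => [m_fam | <- x /=]; last first.
    by rewrite /msupp inE; case: ifP => //= /negbT; rewrite lt0n negbK.
  apply/setP => x; rewrite inE; have := m_fam x; rewrite /=.
  by case: (x \in S) => // /eqP ->.
apply: eq_big => m; first exact: fam_supp.
rewrite fam_supp => /eqP <-.
rewrite prodrXr big_mkcond; congr ('X^_); apply: eq_bigr => x _.
by rewrite inE; case: ifPn => //; rewrite -eqn0Ngt => /eqP.
Qed.

Lemma hilb_coef d :
  (hilb e d)%:Z = (\sum_(S : {set T} | indep e S) pgeom d ^+ #|S|)`_d.
Proof.
under eq_bigr => S _ do rewrite pgeom_expr_card.
have -> : \sum_(S : {set T} | indep e S)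
    \sum_(m : {ffun T -> 'I_d.+1} | msupp m == S) 'X^(\sum_x m x) =
  \sum_(m : {ffun T -> 'I_d.+1} | indep e (msupp m)) 'X^(\sum_x m x) :> {poly int}.
  rewrite [RHS](partition_big (@msupp d) (indep e)) //=.
  apply: eq_bigr => S indS; apply: eq_bigl => m.
  by case: (msupp m =P S) => [->|]; rewrite ?indS ?andbF.
rewrite coef_sum /hilb -sum1_card -natz natr_sum big_mkcond [RHS]big_mkcond /=.
apply: eq_bigr => m _; rewrite inE coefXn andbC eq_sym.
by case: (indep _ _); case: (_ == _).
Qed.

Lemma hilb_coef_pgeom d K : (d <= K)%N ->
  (hilb e d)%:Z = (\sum_(S : {set T} | indep e S) pgeom K ^+ #|S|)`_d.
Proof.
move=> le_dK; rewrite hilb_coef !coef_sum; apply: eq_bigr => S _.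
rewrite -(subnKC le_dK) pgeom_split.
have [r ->] := exprD_Xn (pgeom d : {poly int}) (\sum_(j < K - d) 'X^j) d.+1 #|S|.
by rewrite coef_addXnM.
Qed.

Lemma indep_card_le (S : {set T}) : indep e S -> (#|S| <= alpha e)%N.
Proof. exact: leq_bigmax_cond. Qed.

Lemma hcoefE k : hcoef e k = \sum_(S : {set T} | indep e S)
  (if (#|S| <= k)%N then (-1) ^+ (k - #|S|) * ('C(alpha e - #|S|, k - #|S|))%:Z else 0).
Proof.
transitivity (((1 - 'X) ^+ alpha e *
    \sum_(S : {set T} | indep e S) pgeom k.+1 ^+ #|S| : {poly int})`_k).
  rewrite coef_1subX_exprM; apply: eq_bigr => j _.
  by rewrite natz (hilb_coef_pgeom (leq_trans (leq_subr j k) (leqnSn k))).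
rewrite mulr_sumr coef_sum; apply: eq_bigr => S indS.
by rewrite coef_1subX_pgeom ?natz ?indep_card_le.
Qed.

Lemma hcoef_gt k : (alpha e < k)%N -> hcoef e k = 0.
Proof.
move=> lt_ak; rewrite hcoefE big1 // => S /indep_card_le le_Sa.
by case: leqP => // _; rewrite bin_small ?mulr0 // ltn_sub2r // (leq_ltn_trans le_Sa).
Qed.

Lemma hcoef_alpha : hcoef e (alpha e) = (-1) ^+ alpha e * indepN1 e setT.
Proof.
rewrite hcoefE /indepN1 mulr_sumr; apply: eq_big => [S | S /indep_card_le le_Sa].
  by rewrite subsetT.
by rewrite le_Sa binn mulr1 -{2}(subnK le_Sa) exprD -mulrA -expr2 sqrr_sign mulr1.
Qed.
End HilbertSeries.

Lemma cycle_graphE n (x y : 'I_n) : cycle_graph n x y =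
  [|| (y : nat) == x.+1, (x : nat) == y.+1,
      ((x : nat) == n.-1) && ((y : nat) == 0%N) | ((y : nat) == n.-1) && ((x : nat) == 0%N)].
Proof.
have modS (z : 'I_n) : (z.+1 %% n = if z.+1 == n then 0 else z.+1)%N.
  by case: eqP => [->|ne_zn]; rewrite ?modnn // modn_small // ltn_neqAle ltn_ord andbT; apply/eqP.
rewrite /cycle_graph !modS; have := ltn_ord x; have := ltn_ord y.
by case: (x.+1 =P n); case: (y.+1 =P n) => *; lia.
Qed.

Lemma alpha_cycle n : (3 <= n)%N -> alpha (cycle_graph n) = n./2.
Proof.
move=> n_ge3; apply/eqP; rewrite eqn_leq; apply/andP; split.
  apply/bigmax_leqP => S /indepP indS.
  have disj_shift : [disjoint S & [set ordS x | x in S]].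
    rewrite -setI_eq0; apply/eqP/setP => y; rewrite !inE.
    apply/negP => /andP[Sy /imsetP[x Sx Ey]].
    by have := indS x y Sx Sy; rewrite /cycle_graph Ey /= eqxx.
  have := max_card (mem (S :|: [set ordS x | x in S])).
  rewrite card_ord cardsU (card_imset _ (@ordS_inj n)) (disjoint_setI0 disj_shift) cards0.
  by rewrite subn0; have := odd_double_half n; case: (odd n) => /=; lia.
have even_lt (j : 'I_n./2) : (j.*2 < n)%N.
  by have := ltn_ord j; have := odd_double_half n; case: (odd n) => /=; lia.
pose even (j : 'I_n./2) : 'I_n := Ordinal (even_lt j).
have even_inj : injective even by move=> j j' /(congr1 val) /= /double_inj /val_inj.
rewrite -[X in (X <= _)%N]card_ord -cardsT -(card_imset _ even_inj).
apply: leq_bigmax_cond; apply/indepP => _ _ /imsetP[j _ ->] /imsetP[j' _ ->].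
rewrite cycle_graphE /=; have := ltn_ord j; have := ltn_ord j'.
by have := odd_double_half n; case: (odd n) => /=; lia.
Qed.

(* [I(P_k; -1)] for the path [P_k] on [k] vertices: 1, 0, -1, -1, 0, 1, ... *)
Fixpoint indepN1_path (k : nat) : int :=
  match k with
  | 0 => 1
  | 1 => 0
  | (k'.+1 as k1).+1 => indepN1_path k1 - indepN1_path k'
  end.

Definition arc n (l r : nat) : {set 'I_n} := [set x : 'I_n | (l <= x < r)%N].

Lemma arc_empty n l r : (r <= l)%N -> arc n l r = set0.
Proof. by move=> le_rl; apply/setP => x; rewrite !inE; lia. Qed.

Lemma indepN1_arcS n l r : (0 < l <= r)%N -> (r < n)%N ->
  indepN1 (cycle_graph n) (arc n l r.+1) =
  indepN1 (cycle_graph n) (arc n l r) - indepN1 (cycle_graph n) (arc n l r.-1).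
Proof.
move=> /andP[l_gt0 le_lr] lt_rn; pose v := Ordinal lt_rn.
have arc_v : v \in arc n l r.+1 by rewrite inE /= le_lr ltnSn.
have loopless_v : ~~ cycle_graph n v v by rewrite cycle_graphE /=; lia.
rewrite (indepN1_delete arc_v loopless_v).
congr (_ - _); congr (indepN1 _ _); apply/setP => x; rewrite !inE -val_eqE /= ?cycle_graphE /=;
  have := ltn_ord x; lia.
Qed.

Lemma indepN1_arc n l k : (0 < l)%N -> (l + k <= n)%N ->
  indepN1 (cycle_graph n) (arc n l (l + k)) = indepN1_path k.
Proof.
move=> l_gt0; elim/ltn_ind: k => [[|[|k]]] IH le_n.
- by rewrite addn0 arc_empty // indepN1_set0.
- by rewrite addn1 indepN1_arcS ?leqnn ?l_gt0 ?arc_empty ?indepN1_set0 ?subrr //; lia.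
rewrite !addnS indepN1_arcS /=; [|lia|lia].
by rewrite -!addnS !IH //; lia.
Qed.

Lemma indepN1_cycle n : (3 <= n)%N ->
  indepN1 (cycle_graph n) setT = indepN1_path (n - 1) - indepN1_path (n - 3).
Proof.
move=> n_ge3; have n_gt0 : (0 < n)%N by lia.
rewrite (@indepN1_delete _ _ _ (Ordinal n_gt0)) ?inE ?cycle_graphE //=; last by lia.
rewrite -(@indepN1_arc n 1 (n - 1)) -?(@indepN1_arc n 2 (n - 3)) //; try lia.
congr (_ - _); congr (indepN1 _ _); apply/setP => x; rewrite !inE -val_eqE /= ?cycle_graphE /=;
  have := ltn_ord x; lia.
Qed.

Lemma indepN1_path_period6 k : indepN1_path k.+3.+3 = indepN1_path k.
Proof. by rewrite /=; ring. Qed.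

Definition cycle_htop n : int := (-1) ^+ n./2 * (indepN1_path (n - 1) - indepN1_path (n - 3)).

Lemma cycle_htop_period12 n : (3 <= n)%N -> cycle_htop (n + 12) = cycle_htop n.
Proof.
move=> n_ge3; rewrite /cycle_htop halfD andbF add0n exprD mulr1.
have -> : (n + 12 - 1 = (n - 1).+3.+3.+3.+3)%N by lia.
have -> : (n + 12 - 3 = (n - 3).+3.+3.+3.+3)%N by lia.
by rewrite !indepN1_path_period6.
Qed.

Lemma cycle_htop_eq1 n : (3 <= n)%N ->
  (cycle_htop n == 1) = ((n %% 12)%N \in ([:: 1; 2; 5; 10] : seq nat)).
Proof.
elim/ltn_ind: n => n IH n_ge3.
have [n_lt15 | n_ge15] := ltnP n 15.
  by clear IH; do 15! (case: n n_ge3 n_lt15 => [|n] n_ge3 n_lt15; first by vm_compute).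
have -> : n = (n - 12 + 12)%N by lia.
by rewrite cycle_htop_period12 ?modnDr ?IH //; lia.
Qed.

Theorem theorem2p3 (n : nat) (hn : (3 <= n)%N) :
  pseudo_gorenstein_star (cycle_graph n) <-> ((n %% 12)%N \in ([:: 1; 2; 5; 10] : seq nat)).
Proof.
have htop : hcoef (cycle_graph n) (alpha (cycle_graph n)) = cycle_htop n.
  by rewrite hcoef_alpha indepN1_cycle // alpha_cycle.
rewrite /pseudo_gorenstein_star htop -cycle_htop_eq1 //.
split => [[/eqP] // | /eqP htop1]; split=> // k; exact: hcoef_gt.
Qed.
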